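(* $$\sum_{k=1}^\infty\frac{18675k^2+7627k+670}{(4k+1)(-8)^k\binom{4k}k}=-30-192\log2.$$ *)

From Stdlib Require Import Reals.
From Coquelicot Require Import Coquelicot.
Open Scope R_scope.

Definition summand (k : nat) : R :=
  (18675 * INR k ^ 2 + 7627 * INR k + 670) /
  ((4 * INR k + 1) * (-8) ^ k * Binomial.C (4 * k) k).

From Stdlib Require Import Reals Lra Lia Psatz Factorial.
From Coquelicot Require Import Coquelicot.
Open Scope R_scope.

(* Since 1 / ((4k+1) binom(4k,k)) is the Beta integral of x^k (1-x)^(3k) over [0,1],
   the k-th summand is the integral of p(k) tau(x)^k, where tau(x) = x (1-x)^3 / (-8)
   and p is the quadratic numerator.  The power series sum_k p(k) T^k has rational
   closed-form tails, so the series is the integral over [0,1] of a rational function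
   of x, which has an elementary antiderivative.  Exchanging sum and integral is
   justified because |tau| <= 1/32 on [0,1], so the tails are uniformly O(8^-N). *)

Lemma is_RInt_one_minus_pow (b : nat) :
  is_RInt (fun x => (1 - x) ^ b) 0 1 (/ INR (S b)).
Proof.
  assert (Hb : INR (S b) <> 0) by (apply not_0_INR; lia).
  replace (/ INR (S b))
    with (minus (- (1 - 1) ^ S b / INR (S b)) (- (1 - 0) ^ S b / INR (S b))).
  - apply (is_RInt_derive (fun x => - (1 - x) ^ S b / INR (S b))).
    + intros x _. set (c := INR (S b)) in *. auto_derive; [easy|].
      change (match b with 0%nat => 1 | S _ => INR b + 1 end) with c.
      match goal with |- ?u = ?v => change (@eq R u v) end.
      rewrite <- Rminus_def. field. exact Hb.
    + intros x _. apply (ex_derive_continuous (K := R_AbsRing) (V := R_NormedModule)).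
      auto_derive. easy.
  - rewrite Rminus_diag, Rminus_0_r, pow1, pow_i by lia.
    unfold minus, plus, opp; simpl. field. exact Hb.
Qed.

Lemma is_derive_beta_kernel (a b : nat) (x : R) :
  is_derive (fun y => y ^ S a * (1 - y) ^ S b) x
    (INR (S a) * (x ^ a * (1 - x) ^ S b) - INR (S b) * (x ^ S a * (1 - x) ^ b)).
Proof.
  auto_derive; [easy|].
  change (match a with 0%nat => 1 | S _ => INR a + 1 end) with (INR (S a)).
  change (match b with 0%nat => 1 | S _ => INR b + 1 end) with (INR (S b)).
  rewrite <- Rminus_def; cbn [pow]. ring.
Qed.

Lemma is_RInt_beta_by_parts (a b : nat) :
  is_RInt (fun x => INR (S a) * (x ^ a * (1 - x) ^ S b)
                    - INR (S b) * (x ^ S a * (1 - x) ^ b)) 0 1 0.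
Proof.
  assert (Hends : minus (1 ^ S a * (1 - 1) ^ S b) (0 ^ S a * (1 - 0) ^ S b) = 0).
  { rewrite Rminus_diag, !pow_i by lia. unfold minus, plus, opp; simpl. ring. }
  rewrite <- Hends at 2.
  apply (is_RInt_derive (fun x => x ^ S a * (1 - x) ^ S b)).
  - intros x _. apply is_derive_beta_kernel.
  - intros x _. apply (ex_derive_continuous (K := R_AbsRing) (V := R_NormedModule)).
    auto_derive. easy.
Qed.

Lemma is_RInt_beta (a b : nat) :
  is_RInt (fun x => x ^ a * (1 - x) ^ b) 0 1
    (INR (fact a) * INR (fact b) / INR (fact (a + b + 1))).
Proof.
  revert b; induction a as [|a IH]; intros b.
  - replace (0 + b + 1)%nat with (S b) by lia.
    rewrite fact_simpl, mult_INR; simpl (INR (fact 0)).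
    replace (1 * INR (fact b) / (INR (S b) * INR (fact b))) with (/ INR (S b)).
    + apply (is_RInt_ext (fun x => (1 - x) ^ b)); [intros x _; simpl; ring|].
      apply is_RInt_one_minus_pow.
    + field. split; [apply INR_fact_neq_0 | apply not_0_INR; lia].
  - assert (Hb : INR (S b) <> 0) by (apply not_0_INR; lia).
    pose proof (is_RInt_scal _ 0 1 (/ INR (S b)) _
      (is_RInt_minus _ _ 0 1 _ _
        (is_RInt_scal _ 0 1 (INR (S a)) _ (IH (S b))) (is_RInt_beta_by_parts a b)))
      as H.
    replace (INR (fact (S a)) * INR (fact b) / INR (fact (S a + b + 1)))
      with (/ INR (S b) * (INR (S a)
              * (INR (fact a) * INR (fact (S b)) / INR (fact (a + S b + 1))) - 0)).
    + refine (is_RInt_ext _ _ _ _ _ _ H).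
      intros x _. unfold scal, minus, plus, opp; simpl; unfold mult; simpl.
      field. exact Hb.
    + replace (a + S b + 1)%nat with (S a + b + 1)%nat by lia.
      rewrite (fact_simpl a), (fact_simpl b), !mult_INR.
      field. split; [apply INR_fact_neq_0 | exact Hb].
Qed.

Lemma beta_binomial (k m : nat) :
  INR (fact k) * INR (fact m) / INR (fact (k + m + 1))
  = / (INR (k + m + 1) * Binomial.C (k + m) k).
Proof.
  unfold Binomial.C. replace (k + m - k)%nat with m by lia.
  replace (k + m + 1)%nat with (S (k + m)) by lia.
  rewrite fact_simpl, mult_INR.
  pose proof (INR_fact_neq_0 k); pose proof (INR_fact_neq_0 m).
  pose proof (INR_fact_neq_0 (k + m)).
  field. repeat split; try assumption. apply not_0_INR; lia.
Qed.

Lemma is_RInt_sum_n {V : NormedModule R_AbsRing}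
    (f : nat -> R -> V) (I : nat -> V) (a b : R) (N : nat) :
  (forall n, is_RInt (f n) a b (I n)) ->
  is_RInt (fun x => sum_n (fun n => f n x) N) a b (sum_n I N).
Proof.
  intros Hf. induction N as [|N IH].
  - rewrite sum_O. apply (is_RInt_ext (f 0%nat)); [intros x _; now rewrite sum_O|].
    apply Hf.
  - rewrite sum_Sn.
    apply (is_RInt_ext (fun x => plus (sum_n (fun n => f n x) N) (f (S N) x))).
    + intros x _. now rewrite sum_Sn.
    + exact (is_RInt_plus _ _ _ _ _ _ IH (Hf (S N))).
Qed.

Section QuadraticGeometricSeries.

Variables a b c : R.

Definition quad (m : R) : R := a * m ^ 2 + b * m + c.

(* Closed form of sum_(k > N) quad k * T^k for |T| < 1, obtained by differentiating
   the geometric series twice. *)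
Definition quad_geom_tail (N : nat) (T : R) : R :=
  T ^ S N * (quad (INR N + 1) / (1 - T)
             + (2 * a * (INR N + 1) + a + b) * T / (1 - T) ^ 2
             + 2 * a * T ^ 2 / (1 - T) ^ 3).

Lemma quad_geom_tail_step (N : nat) (T : R) : T <> 1 ->
  quad_geom_tail N T - quad_geom_tail (S N) T = quad (INR (S N)) * T ^ S N.
Proof.
  intros HT. unfold quad_geom_tail, quad. rewrite S_INR.
  change (T ^ S (S N)) with (T * T ^ S N).
  field. lra.
Qed.

Lemma sum_quad_geom (N : nat) (T : R) : T <> 1 ->
  sum_n (fun n => quad (INR (S n)) * T ^ S n) N
  = quad_geom_tail 0 T - quad_geom_tail (S N) T.
Proof.
  intros HT. induction N as [|N IH].
  - now rewrite sum_O, quad_geom_tail_step.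
  - rewrite sum_Sn, IH, <- (quad_geom_tail_step (S N) T HT).
    unfold plus; simpl. ring.
Qed.

Lemma quad_geom_tail_bound (N : nat) (T : R) : -1 <= T <= 0 ->
  Rabs (quad_geom_tail N T)
  <= Rabs T ^ S N * (Rabs (quad (INR N + 1))
                     + Rabs (2 * a * (INR N + 1) + a + b) + Rabs (2 * a)).
Proof.
  intros HT. unfold quad_geom_tail.
  rewrite Rabs_mult, <- RPow_abs.
  apply Rmult_le_compat_l; [apply pow_le, Rabs_pos|].
  assert (Hdiv : forall (y : R) (n : nat), Rabs (y / (1 - T) ^ S n) <= Rabs y).
  { intros y n. assert (1 <= (1 - T) ^ S n) by (apply pow_R1_Rle; lra).
    rewrite Rabs_div, (Rabs_pos_eq ((1 - T) ^ S n)) by lra.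
    apply Rmult_le_reg_r with ((1 - T) ^ S n); [lra|].
    field_simplify; [|lra]. pose proof (Rabs_pos y). nra. }
  assert (HT1 : Rabs T <= 1) by (apply Rabs_le; lra).
  eapply Rle_trans; [apply Rabs_triang|].
  apply Rplus_le_compat; [eapply Rle_trans; [apply Rabs_triang|];
                          apply Rplus_le_compat|].
  - rewrite <- (pow_1 (1 - T)). apply Hdiv.
  - eapply Rle_trans; [apply Hdiv|]. rewrite Rabs_mult.
    pose proof (Rabs_pos (2 * a * (INR N + 1) + a + b)). nra.
  - eapply Rle_trans; [apply Hdiv|]. rewrite Rabs_mult, <- RPow_abs.
    assert (Rabs T ^ 2 <= 1) by (simpl; pose proof (Rabs_pos T); nra).
    pose proof (Rabs_pos (2 * a)). nra.
Qed.

Lemma continuous_quad_geom_tail (N : nat) (T : R) : T <> 1 ->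
  continuous (quad_geom_tail N) T.
Proof.
  intros HT. apply (ex_derive_continuous (K := R_AbsRing) (V := R_NormedModule)).
  unfold quad_geom_tail, quad. auto_derive.
  repeat split; repeat apply Rmult_integral_contrapositive_currified; lra.
Qed.

End QuadraticGeometricSeries.

Lemma is_lim_seq_of_geom_bound (u : nat -> R) (l K q : R) :
  0 <= q < 1 -> (forall N, Rabs (u N - l) <= K * q ^ N) -> is_lim_seq u l.
Proof.
  intros Hq Hu.
  assert (He : is_lim_seq (fun N => K * q ^ N) 0).
  { replace (Finite 0) with (Rbar_mult K 0) by (simpl; f_equal; ring).
    apply is_lim_seq_scal_l, is_lim_seq_geom. rewrite Rabs_pos_eq; lra. }
  apply is_lim_seq_le_le with (fun N => l - K * q ^ N) (fun N => l + K * q ^ N).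
  - intros N. specialize (Hu N). apply Rabs_le_between in Hu. lra.
  - replace (Finite l) with (Rbar_minus l 0) by (simpl; f_equal; ring).
    apply is_lim_seq_minus'; [apply is_lim_seq_const | exact He].
  - replace (Finite l) with (Rbar_plus l 0) by (simpl; f_equal; ring).
    apply is_lim_seq_plus'; [apply is_lim_seq_const | exact He].
Qed.

Lemma is_lim_seq_RInt_of_geom_bound (f : R -> R) (F : nat -> R -> R) (s : nat -> R)
    (lo hi l K q : R) :
  lo <= hi -> 0 <= q < 1 ->
  is_RInt f lo hi l -> (forall N, is_RInt (F N) lo hi (s N)) ->
  (forall N x, lo <= x <= hi -> Rabs (f x - F N x) <= K * q ^ N) ->
  is_lim_seq s l.
Proof.
  intros Hlohi Hq Hf HF Hbound.
  apply is_lim_seq_of_geom_bound with ((hi - lo) * K) q; [exact Hq|].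
  intros N. rewrite Rabs_minus_sym, Rmult_assoc.
  exact (norm_RInt_le_const (fun x => f x - F N x) lo hi _ _ Hlohi (Hbound N)
           (is_RInt_minus _ _ _ _ _ _ Hf (HF N))).
Qed.

Definition tau (x : R) : R := x * (1 - x) ^ 3 / -8.

Local Notation p := (quad 18675 7627 670).
Local Notation tail := (quad_geom_tail 18675 7627 670).

Lemma tau_range (x : R) : 0 <= x <= 1 -> -1/32 <= tau x <= 0.
Proof.
  intros Hx. unfold tau.
  assert (Hx1x : 0 <= x * (1 - x) <= 1/4)
    by (pose proof (pow2_ge_0 (x - 1/2)); split; nra).
  assert (H1x : 0 <= (1 - x) ^ 2 <= 1) by (simpl; split; nra).
  assert (Hprod : 0 <= x * (1 - x) ^ 3 <= 1/4).
  { replace (x * (1 - x) ^ 3) with (x * (1 - x) * (1 - x) ^ 2) by ring. split; nra. }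
  lra.
Qed.

Lemma tau_pow (x : R) (k : nat) : tau x ^ k = x ^ k * (1 - x) ^ (3 * k) / (-8) ^ k.
Proof.
  unfold tau, Rdiv. rewrite !Rpow_mult_distr, pow_inv, pow_mult. reflexivity.
Qed.

Lemma summand_RInt (k : nat) :
  is_RInt (fun x => p (INR k) * tau x ^ k) 0 1 (summand k).
Proof.
  assert (H8 : (-8) ^ k <> 0) by (apply pow_nonzero; lra).
  replace (summand k) with (p (INR k) / (-8) ^ k
    * (INR (fact k) * INR (fact (3 * k)) / INR (fact (k + 3 * k + 1)))).
  - apply (is_RInt_ext (fun x => scal (p (INR k) / (-8) ^ k) (x ^ k * (1 - x) ^ (3 * k)))).
    + intros x _. rewrite tau_pow. unfold scal; simpl; unfold mult; simpl.
      field. exact H8.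
    + exact (is_RInt_scal _ 0 1 _ _ (is_RInt_beta k (3 * k))).
  - rewrite beta_binomial. replace (k + 3 * k)%nat with (4 * k)%nat by lia.
    rewrite plus_INR, mult_INR. unfold summand, quad. simpl (INR 4); simpl (INR 1).
    assert (Hbin : Binomial.C (4 * k) k <> 0).
    { unfold Binomial.C. apply Rmult_integral_contrapositive. split.
      - apply INR_fact_neq_0.
      - apply Rinv_neq_0_compat, Rmult_integral_contrapositive.
        split; apply INR_fact_neq_0. }
    pose proof (pos_INR k).
    field. repeat split; try assumption. lra.
Qed.

(* Found by partial fractions, using
   8 (1 - tau x) = 8 + x (1 - x)^3 = (1 + x) (8 - 7x + 4x^2 - x^3). *)
Definition tail_antider (x : R) : R :=
  (-288000 - 60096 * x + 101620 * x ^ 2 + 22826 * x ^ 3 - 148680 * x ^ 4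
   + 117614 * x ^ 5 - 48940 * x ^ 6 + 14406 * x ^ 7 - 670 * x ^ 9)
  / (8 + x * (1 - x) ^ 3) ^ 2
  - 144 * ln (1 + x) + 48 * ln (8 - 7 * x + 4 * x ^ 2 - x ^ 3).

Lemma is_derive_tail_antider (x : R) : 0 <= x <= 1 ->
  is_derive tail_antider x (tail 0 (tau x)).
Proof.
  intros Hx.
  assert (HQ : 0 < 8 - 7 * x + 4 * x ^ 2 - x ^ 3) by nra.
  assert (HD : 0 < 8 + x * (1 - x) ^ 3) by (pose proof (tau_range x Hx); unfold tau in *; lra).
  unfold tail_antider. auto_derive.
  - change ((8 + x * (1 - x) ^ 3) ^ 2 <> 0 /\ 0 < 1 + x
            /\ 0 < 8 - 7 * x + 4 * x ^ 2 - x ^ 3 /\ True).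
    repeat split; try lra. apply pow_nonzero. lra.
  - unfold quad_geom_tail, quad, tau. simpl INR. field. repeat split; lra.
Qed.

Lemma continuous_tail_tau (x : R) : 0 <= x <= 1 ->
  continuous (fun y => tail 0 (tau y)) x.
Proof.
  intros Hx. apply continuous_comp.
  - apply (ex_derive_continuous (K := R_AbsRing) (V := R_NormedModule)).
    unfold tau. auto_derive. lra.
  - apply continuous_quad_geom_tail. pose proof (tau_range x Hx). lra.
Qed.

Lemma tail_tau_RInt :
  is_RInt (fun x => tail 0 (tau x)) 0 1 (-30 - 192 * ln 2).
Proof.
  replace (-30 - 192 * ln 2) with (minus (tail_antider 1) (tail_antider 0)).
  - apply (is_RInt_derive (V := R_CompleteNormedModule) tail_antider).
    + intros x Hx. rewrite Rmin_left, Rmax_right in Hx by lra.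
      now apply is_derive_tail_antider.
    + intros x Hx. rewrite Rmin_left, Rmax_right in Hx by lra.
      now apply continuous_tail_tau.
  - unfold minus, plus, opp; simpl. unfold tail_antider.
    replace (8 - 7 * 1 + 4 * 1 ^ 2 - 1 ^ 3) with (2 * 2) by ring.
    replace (8 - 7 * 0 + 4 * 0 ^ 2 - 0 ^ 3) with (2 * (2 * 2)) by ring.
    replace (1 + 1) with 2 by ring. replace (1 + 0) with 1 by ring.
    rewrite !ln_mult, ln_1 by lra. field.
Qed.

Lemma tail_tau_bound (N : nat) (x : R) : 0 <= x <= 1 ->
  Rabs (tail (S N) (tau x)) <= 256 * (1/8) ^ N.
Proof.
  intros Hx. pose proof (tau_range x Hx) as Htau.
  eapply Rle_trans; [apply quad_geom_tail_bound; lra|].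
  set (m := INR N + 1).
  assert (Hm : 1 <= m) by (pose proof (pos_INR N); unfold m; lra).
  assert (Hm2 : m <= 2 ^ N).
  { unfold m. rewrite <- S_INR, <- (pow_INR 2). apply le_INR, Nat.pow_gt_lin_r. lia. }
  assert (Hcoef : Rabs (p (INR (S N) + 1)) + Rabs (2 * 18675 * (INR (S N) + 1) + 18675 + 7627)
                  + Rabs (2 * 18675) <= 2 ^ 18 * m ^ 2).
  { rewrite S_INR. fold m. unfold quad.
    rewrite !Rabs_pos_eq by nra. simpl. nra. }
  assert (Hpow : Rabs (tau x) ^ S (S N) <= (1/32) ^ N * (1/32) ^ 2).
  { rewrite <- pow_add, Nat.add_comm. apply pow_incr. split; [apply Rabs_pos|].
    apply Rabs_le; lra. }
  assert (Hm4 : m ^ 2 <= 4 ^ N).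
  { replace 4 with (2 ^ 2) by ring. rewrite <- pow_mult, Nat.mul_comm, pow_mult.
    apply pow_incr. lra. }
  replace ((1/8) ^ N) with ((1/32) ^ N * 4 ^ N)
    by (rewrite <- Rpow_mult_distr; f_equal; field).
  assert (0 <= (1/32) ^ N) by (apply pow_le; lra).
  assert (0 <= Rabs (tau x) ^ S (S N)) by (apply pow_le, Rabs_pos).
  assert (0 <= m ^ 2) by nra.
  apply Rle_trans with ((1/32) ^ N * (1/32) ^ 2 * (2 ^ 18 * m ^ 2)).
  - apply Rmult_le_compat; try lra.
    repeat apply Rplus_le_le_0_compat; apply Rabs_pos.
  - replace ((1/32) ^ 2) with (/ 1024) by field. replace (2 ^ 18) with 262144 by ring. nra.
Qed.

Theorem lemma3p1 :
  is_series (fun n : nat => summand (S n)) (-30 - 192 * ln 2).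
Proof.
  change (is_lim_seq (sum_n (fun n => summand (S n))) (-30 - 192 * ln 2)).
  apply (is_lim_seq_RInt_of_geom_bound
           (fun x => tail 0 (tau x))
           (fun N x => sum_n (fun n => p (INR (S n)) * tau x ^ S n) N)
           (sum_n (fun n => summand (S n))) 0 1 (-30 - 192 * ln 2) 256 (1/8)).
  - lra.
  - lra.
  - exact tail_tau_RInt.
  - intros N. apply (is_RInt_sum_n (fun n x => p (INR (S n)) * tau x ^ S n)).
    intros n. apply summand_RInt.
  - intros N x Hx. pose proof (tau_range x Hx).
    rewrite sum_quad_geom by lra.
    replace (tail 0 (tau x) - (tail 0 (tau x) - tail (S N) (tau x)))
      with (tail (S N) (tau x)) by ring.
    now apply tail_tau_bound.
Qed.
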